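(* Let $K\subseteq\mathbb{R}$ be a cubic number field having exactly one real embedding, and let $\alpha,\beta\in K$. Then there exists a strictly increasing sequence $(\psi_n)_{n\ge1}$ of positive integers such that $\lim_{n\to\infty}\psi_n\|\psi_n\alpha\|\,\|\psi_n\beta\|=0$.
   Context: For $x\in\mathbb{R}$, $\|x\|$ denotes the distance from $x$ to the nearest integer. *)

From Stdlib Require Import Reals QArith Qreals.
Open Scope R_scope.

(* ||x|| : distance from x to the nearest integer.
   Int_part x is floor x (IZR (Int_part x) <= x < IZR (Int_part x) + 1). *)
Definition dist_nint (x : R) : R :=
  let f := x - IZR (Int_part x) in Rmin f (1 - f).

Definition in_Q_theta3 (theta x : R) : Prop :=
  exists q0 q1 q2 : Q, x = Q2R q0 + Q2R q1 * theta + Q2R q2 * theta ^ 2.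

(* theta has degree exactly 3 over Q: 1, theta, theta^2 are Q-linearly
   independent and theta is a root of the monic rational cubic
   X^3 + a X^2 + b X + c (which is then its minimal polynomial). *)
Definition cubic_min_poly (theta : R) (a b c : Q) : Prop :=
  theta ^ 3 + Q2R a * theta ^ 2 + Q2R b * theta + Q2R c = 0 /\
  (forall q0 q1 q2 : Q,
      Q2R q0 + Q2R q1 * theta + Q2R q2 * theta ^ 2 = 0 ->
      Q2R q0 = 0 /\ Q2R q1 = 0 /\ Q2R q2 = 0).

(* The real embeddings of Q(theta) correspond to the real roots of the
   minimal polynomial; exactly one real embedding means theta is its only
   real root. *)
Definition only_real_root (theta : R) (a b c : Q) : Prop :=
  forall x : R, x ^ 3 + Q2R a * x ^ 2 + Q2R b * x + Q2R c = 0 -> x = theta.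

From Stdlib Require Import Reals QArith Qreals Lra Lia ZArith ClassicalEpsilon.
Open Scope R_scope.

(* Scaled by a denominator, theta becomes an algebraic integer eta with complex conjugates
   u +- i v, and Z[eta] embeds into R (eta |-> eta) and into C (eta |-> u + i v); the norm
   of x is emb x * |x|_C^2.  Pigeonholing a box of Z[eta] gives elements of bounded norm and
   arbitrarily small complex image; two of them with equal norm and congruent modulo it
   differ by a unit factor e with E := emb e > 1, complex image rho e^(i phi), rho^2 E = 1.
   The trace t_n = E^n + 2 rho^n cos (n phi) of e^n is an integer, and for g in Z[eta] the
   integer trace (g e^n) differs from t_n emb g by 2 rho^n (A cos (n phi) + B sin (n phi)).
   So if D clears the denominators of alpha and beta, psi = D t_n gives
   psi ||psi alpha|| ||psi beta|| = O(E^n rho^(2n) |cos (n phi - chi)|) = O(|cos (n phi - chi)|).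
   Since no power of e is rational, phi / PI is irrational, and n phi - chi comes arbitrarily
   close to PI / 2 modulo PI for arbitrarily large n. *)

Lemma pigeonhole n (f : nat -> nat) :
  (forall i, (i <= n)%nat -> (f i < n)%nat) ->
  exists i j, (i < j <= n)%nat /\ f i = f j.
Proof.
  revert f; induction n as [|n IH]; intros f Hf.
  - specialize (Hf 0%nat (le_n 0)). lia.
  - destruct (Classical_Prop.classic (exists i, (i <= n)%nat /\ f i = f (S n)))
      as [[i [Hi Hfi]]|Hnone].
    { exists i, (S n). split; [lia|exact Hfi]. }
    set (g := fun i => if (f i <? f (S n))%nat then f i else (f i - 1)%nat).
    assert (Hne : forall i, (i <= n)%nat -> f i <> f (S n))
      by (intros i Hi E; apply Hnone; exists i; split; auto).
    destruct (IH g) as [i [j [Hij Hg]]].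
    + intros i Hi. unfold g. pose proof (Hf i ltac:(lia)). pose proof (Hf (S n) ltac:(lia)).
      pose proof (Hne i Hi). destruct (Nat.ltb_spec (f i) (f (S n))); lia.
    + exists i, j. split; [lia|]. unfold g in Hg.
      pose proof (Hne i ltac:(lia)). pose proof (Hne j ltac:(lia)).
      destruct (Nat.ltb_spec (f i) (f (S n))), (Nat.ltb_spec (f j) (f (S n))); lia.
Qed.

Lemma Int_part_eq_dist_lt1 x y : Int_part x = Int_part y -> Rabs (x - y) < 1.
Proof.
  intro E. destruct (base_Int_part x), (base_Int_part y).
  rewrite E in *. apply Rabs_def1; lra.
Qed.

Lemma dist_nint_ge0 x : 0 <= dist_nint x.
Proof. unfold dist_nint. destruct (base_Int_part x). apply Rmin_glb; lra. Qed.

Lemma dist_nint_le x (k : Z) : dist_nint x <= Rabs (x - IZR k).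
Proof.
  unfold dist_nint. destruct (base_Int_part x) as [H1 H2].
  destruct (Z_le_gt_dec k (Int_part x)) as [Hk|Hk].
  - apply IZR_le in Hk. rewrite Rabs_right by lra. eapply Rle_trans; [apply Rmin_l|]. lra.
  - assert (Hk' : (Int_part x + 1 <= k)%Z) by lia. apply IZR_le in Hk'. rewrite plus_IZR in Hk'.
    rewrite Rabs_left1 by lra. eapply Rle_trans; [apply Rmin_r|]. lra.
Qed.

Lemma Rabs_sin_le x : Rabs (sin x) <= Rabs x.
Proof.
  assert (Hpos : forall y, 0 < y -> Rabs (sin y) <= y).
  { intros y Hy. pose proof (sin_lt_x y Hy). pose proof (SIN_bound y). pose proof PI2_1.
    destruct (Rlt_or_le y 1).
    - rewrite Rabs_right; [lra|]. apply Rle_ge, sin_ge_0; lra.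
    - apply Rabs_le. lra. }
  destruct (Rtotal_order x 0) as [H|[->|H]].
  - pose proof (Hpos (- x) ltac:(lra)). rewrite sin_neg, Rabs_Ropp in *.
    rewrite (Rabs_left x); lra.
  - rewrite sin_0, Rabs_R0. lra.
  - rewrite (Rabs_right x) by lra. auto.
Qed.

Lemma Rabs_sin_le_dist_PI x (k : Z) : Rabs (sin x) <= Rabs (x - IZR k * PI).
Proof.
  replace x with ((x - IZR k * PI) + IZR k * PI) at 1 by ring.
  rewrite sin_plus, (sin_eq_0_1 (IZR k * PI)) by (exists k; reflexivity).
  rewrite Rmult_0_r, Rplus_0_r, Rabs_mult.
  pose proof (Rabs_pos (sin (x - IZR k * PI))).
  assert (Rabs (cos (IZR k * PI)) <= 1) by (apply Rabs_le, COS_bound).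
  pose proof (Rabs_sin_le (x - IZR k * PI)). nra.
Qed.

Lemma polar_form A B :
  exists phi, A = sqrt (A ^ 2 + B ^ 2) * cos phi /\ B = sqrt (A ^ 2 + B ^ 2) * sin phi.
Proof.
  set (R := sqrt (A ^ 2 + B ^ 2)).
  assert (HR2 : R * R = A ^ 2 + B ^ 2) by (apply sqrt_sqrt; nra).
  pose proof (sqrt_pos (A ^ 2 + B ^ 2)) as HR0; fold R in HR0.
  destruct (Req_dec R 0) as [E|E].
  { exists 0. assert (A = 0) by nra. assert (B = 0) by nra. subst. rewrite E. lra. }
  set (x := A / R).
  assert (Hx : -1 <= x <= 1).
  { unfold x. split; apply Rmult_le_reg_r with R; try lra;
      unfold Rdiv; rewrite Rmult_assoc, Rinv_l; nra. }
  assert (Hs : sqrt (1 - x²) = Rabs B / R).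
  { replace (1 - x²) with (Rsqr (B / R)).
    - rewrite sqrt_Rsqr_abs. unfold Rdiv. rewrite Rabs_mult, Rabs_inv, (Rabs_right R); lra.
    - unfold Rsqr, x. apply Rmult_eq_reg_r with (R * R); [|nra]. field_simplify; lra. }
  destruct (Rle_or_lt 0 B).
  - exists (acos x). rewrite cos_acos, sin_acos, Hs, Rabs_right by lra.
    unfold x. fold R. split; field; lra.
  - exists (- acos x). rewrite cos_neg, sin_neg, cos_acos, sin_acos, Hs, Rabs_left by lra.
    unfold x. fold R. split; field; lra.
Qed.

Lemma Rabs_le_inv x b : Rabs x <= b -> - b <= x <= b.
Proof. pose proof (Rle_abs x). pose proof (Rle_abs (- x)). rewrite Rabs_Ropp in *. lra. Qed.

Lemma INR_up_nat x : 0 <= x -> exists n : nat, x < INR n <= x + 1.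
Proof.
  intro Hx. destruct (archimed x) as [H1 H2].
  exists (Z.to_nat (up x)). rewrite INR_IZR_INZ, Z2Nat.id; [lra|].
  apply le_IZR. lra.
Qed.

Lemma small_rotation phi :
  (forall k : nat, (1 <= k)%nat -> sin (INR k * phi) <> 0) ->
  forall delta, 0 < delta ->
  exists (d : nat) (k : Z) (e : R),
    (1 <= d)%nat /\ INR d * phi = PI * (IZR k + e) /\ e <> 0 /\ Rabs e < delta.
Proof.
  intros Hirr delta Hd. pose proof PI_RGT_0.
  destruct (INR_up_nat (/ delta)) as [M [HM _]]; [left; apply Rinv_0_lt_compat, Hd|].
  assert (HM0 : 0 < INR M) by (pose proof (Rinv_0_lt_compat delta Hd); lra).
  set (fr := fun i : nat => INR i * phi / PI - IZR (Int_part (INR i * phi / PI))).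
  assert (Hfr : forall i, 0 <= fr i < 1)
    by (intro i; unfold fr; destruct (base_Int_part (INR i * phi / PI)); lra).
  assert (Hbin : forall i, (0 <= Int_part (INR M * fr i) < Z.of_nat M)%Z).
  { intro i. destruct (Hfr i), (base_Int_part (INR M * fr i)).
    assert (Hlo : IZR (-1) < IZR (Int_part (INR M * fr i))) by (simpl; nra).
    assert (Hhi : IZR (Int_part (INR M * fr i)) < IZR (Z.of_nat M))
      by (rewrite <- INR_IZR_INZ; nra).
    apply lt_IZR in Hlo, Hhi. lia. }
  destruct (pigeonhole M (fun i => Z.to_nat (Int_part (INR M * fr i)))) as [i [j [Hij Hb]]].
  { intros i _. pose proof (Hbin i). lia. }
  apply Z2Nat.inj in Hb; [|apply Hbin|apply Hbin].
  apply Int_part_eq_dist_lt1 in Hb.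
  exists (j - i)%nat, (Int_part (INR j * phi / PI) - Int_part (INR i * phi / PI))%Z, (fr j - fr i).
  assert (Hdphi : INR (j - i) * phi
    = PI * (IZR (Int_part (INR j * phi / PI) - Int_part (INR i * phi / PI)) + (fr j - fr i))).
  { unfold fr. rewrite minus_INR, minus_IZR by lia. field. lra. }
  split; [lia|split; [exact Hdphi|split]].
  - intro E. apply (Hirr (j - i)%nat ltac:(lia)). rewrite Hdphi, E, Rplus_0_r, Rmult_comm.
    apply sin_eq_0_1. eexists; reflexivity.
  - replace (INR M * fr i - INR M * fr j) with (- INR M * (fr j - fr i)) in Hb by ring.
    rewrite Rabs_mult, Rabs_Ropp, (Rabs_right (INR M)) in Hb by lra.
    apply (Rmult_lt_reg_l (INR M)); [lra|].
    apply Rlt_trans with 1; [lra|].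
    apply (Rmult_lt_compat_r delta) in HM; [|lra]. rewrite Rinv_l in HM; lra.
Qed.

Lemma multiple_near_shift (e T : R) (N0 : nat) : e <> 0 ->
  exists (J : nat) (L : Z), (N0 <= J)%nat /\ Rabs (INR J * e - T - IZR L) <= Rabs e.
Proof.
  assert (Hpos : forall e T, 0 < e ->
    exists (J : nat) (L : Z), (N0 <= J)%nat /\ Rabs (INR J * e - T - IZR L) <= e).
  { clear e T. intros e T He.
    set (L := up (Rabs T + INR N0 * e)).
    destruct (archimed (Rabs T + INR N0 * e)) as [HL _]. fold L in HL.
    pose proof (Rle_abs (- T)). rewrite Rabs_Ropp in *.
    set (y := (T + IZR L) / e).
    assert (Hy : INR N0 <= y).
    { unfold y. apply Rmult_le_reg_r with e; [lra|].
      unfold Rdiv. rewrite Rmult_assoc, Rinv_l; lra. }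
    destruct (INR_up_nat y) as [J [HJ1 HJ2]]; [pose proof (pos_INR N0); lra|].
    exists J, L. split.
    - apply INR_le. lra.
    - assert (E : T + IZR L = y * e) by (unfold y; field; lra).
      apply Rabs_le. split; nra. }
  intro He. destruct (Rtotal_order e 0) as [Hneg|[Hz|Hp]];
    [|contradiction|rewrite Rabs_right by lra; auto].
  destruct (Hpos (- e) (- T) ltac:(lra)) as [J [L [HJ HL]]].
  exists J, (- L)%Z. split; [exact HJ|]. rewrite opp_IZR, (Rabs_left e) by lra.
  replace (INR J * e - T - - IZR L) with (- (INR J * - e - - T - IZR L)) by ring.
  rewrite Rabs_Ropp. exact HL.
Qed.

Lemma cos_mul_arg_small phi :
  (forall k : nat, (1 <= k)%nat -> sin (INR k * phi) <> 0) ->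
  forall chi delta (N0 : nat), 0 < delta ->
  exists n : nat, (N0 <= n)%nat /\ Rabs (cos (INR n * phi - chi)) <= delta.
Proof.
  intros Hirr chi delta N0 Hd. pose proof PI_RGT_0.
  destruct (small_rotation phi Hirr (delta / PI)) as [d [k [e [Hd1 [Hdphi [He0 He]]]]]].
  { apply Rdiv_lt_0_compat; lra. }
  destruct (multiple_near_shift e ((chi - PI / 2) / PI) N0 He0) as [J [L [HJ HL]]].
  exists (J * d)%nat. split; [nia|].
  rewrite cos_sin.
  eapply Rle_trans; [apply (Rabs_sin_le_dist_PI _ (Z.of_nat J * k + L))|].
  replace (PI / 2 + (INR (J * d) * phi - chi) - IZR (Z.of_nat J * k + L) * PI)
    with (PI * (INR J * e - (chi - PI / 2) / PI - IZR L)).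
  2:{ rewrite mult_INR, Rmult_assoc, Hdphi, plus_IZR, mult_IZR, <- INR_IZR_INZ. field. lra. }
  rewrite Rabs_mult, Rabs_right by lra.
  apply (Rmult_lt_compat_l PI) in He; [|lra].
  replace (PI * (delta / PI)) with delta in He by (field; lra). nra.
Qed.

Lemma increasing_subsequence_cv0 (f : nat -> R) :
  (forall (eps : R) (N : nat), 0 < eps -> exists m, (N < m)%nat /\ Rabs (f m) < eps) ->
  exists psi : nat -> nat,
    (forall n, (0 < psi n)%nat) /\ (forall n, (psi n < psi (S n))%nat) /\
    Un_cv (fun n => f (psi n)) 0.
Proof.
  intro Hsmall.
  assert (Hex : forall k N : nat, exists m, (N < m)%nat /\ Rabs (f m) < / INR (S k)).
  { intros k N. apply Hsmall, Rinv_0_lt_compat, lt_0_INR. lia. }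
  set (next := fun k N => proj1_sig (constructive_indefinite_description _ (Hex k N))).
  assert (Hnext : forall k N, (N < next k N)%nat /\ Rabs (f (next k N)) < / INR (S k))
    by (intros k N; exact (proj2_sig (constructive_indefinite_description _ (Hex k N)))).
  set (psi := fix psi n := match n with 0%nat => next 0%nat 0%nat | S n' => next n (psi n') end).
  assert (Hpsi : forall n, Rabs (f (psi n)) < / INR (S n)) by (intros []; apply Hnext).
  exists psi. split; [|split].
  - intros []; eapply Nat.le_lt_trans; [apply Nat.le_0_l|apply Hnext|apply Nat.le_0_l|apply Hnext].
  - intro n. apply Hnext.
  - intros eps Heps. destruct (archimed_cor1 eps Heps) as [K [HK HK0]].
    exists K. intros n Hn. unfold R_dist. rewrite Rminus_0_r.
    eapply Rlt_le_trans; [apply Hpsi|]. eapply Rle_trans; [|left; exact HK].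
    apply Rinv_le_contravar; [apply lt_0_INR; lia|]. apply le_INR. lia.
Qed.

(* Coordinates of an element of Z[eta] in the basis 1, eta, eta^2. *)
Record ZEta := mkZEta { co0 : Z; co1 : Z; co2 : Z }.

Definition zadd (x y : ZEta) := mkZEta (co0 x + co0 y) (co1 x + co1 y) (co2 x + co2 y).
Definition zsub (x y : ZEta) := mkZEta (co0 x - co0 y) (co1 x - co1 y) (co2 x - co2 y).
Definition zscale (k : Z) (x : ZEta) := mkZEta (k * co0 x) (k * co1 x) (k * co2 x).

Lemma zsub_eq0 x y : zsub x y = mkZEta 0 0 0 -> x = y.
Proof.
  destruct x as [x0 x1 x2], y as [y0 y1 y2]. unfold zsub; cbn [co0 co1 co2].
  intro E. injection E as E0 E1 E2. f_equal; lia.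
Qed.

(* Vieta: eta and u +- i v are the roots of X^3 - P X^2 - Q X - R. *)
Definition conj_roots (P Q R eta u v : R) : Prop :=
  P = eta + 2 * u /\ Q = - (2 * u * eta + u ^ 2 + v ^ 2) /\ R = eta * (u ^ 2 + v ^ 2).

Definition int_lin_indep (eta : R) : Prop := forall z0 z1 z2 : Z,
  IZR z0 + IZR z1 * eta + IZR z2 * eta ^ 2 = 0 -> z0 = 0%Z /\ z1 = 0%Z /\ z2 = 0%Z.

Ltac push_IZR := repeat rewrite ?plus_IZR, ?mult_IZR, ?minus_IZR, ?opp_IZR.

Section CubicOrder.
Variables (p q r : Z) (eta u v : R).

(* Uses eta^3 = p eta^2 + q eta + r. *)
Definition zmul (x y : ZEta) : ZEta :=
  let c0 := (co0 x * co0 y)%Z in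
  let c1 := (co0 x * co1 y + co1 x * co0 y)%Z in
  let c2 := (co0 x * co2 y + co1 x * co1 y + co2 x * co0 y)%Z in
  let c3 := (co1 x * co2 y + co2 x * co1 y)%Z in
  let c4 := (co2 x * co2 y)%Z in
  mkZEta (c0 + r * c3 + p * r * c4) (c1 + q * c3 + (p * q + r) * c4)
         (c2 + p * c3 + (p * p + q) * c4).

(* First row of cofactors of the matrix of multiplication by x, whose columns
   are x, x eta and x eta^2. *)
Definition zadj (x : ZEta) : ZEta :=
  let y := zmul x (mkZEta 0 1 0) in
  let z := zmul x (mkZEta 0 0 1) in
  mkZEta (co1 y * co2 z - co2 y * co1 z) (co2 x * co1 z - co1 x * co2 z)
         (co1 x * co2 y - co2 x * co1 y).

Definition znorm (x : ZEta) : Z := co0 (zmul x (zadj x)).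

Definition ztrace (x : ZEta) : Z := (3 * co0 x + p * co1 x + (p * p + 2 * q) * co2 x)%Z.

Lemma zmul_one_add_adj x z :
  zmul (zadd (mkZEta 1 0 0) (zmul z (zadj x))) x = zadd x (zscale (znorm x) z).
Proof.
  destruct x as [x0 x1 x2], z as [z0 z1 z2].
  unfold znorm, zadj, zadd, zscale, zmul; cbn [co0 co1 co2]. f_equal; ring.
Qed.

(* [emb] evaluates at eta; [cre] and [cim] are the real and imaginary parts of the
   evaluation at u + i v. *)
Definition emb (x : ZEta) : R := IZR (co0 x) + IZR (co1 x) * eta + IZR (co2 x) * eta ^ 2.
Definition cre (x : ZEta) : R := IZR (co0 x) + IZR (co1 x) * u + IZR (co2 x) * (u ^ 2 - v ^ 2).
Definition cim (x : ZEta) : R := IZR (co1 x) * v + IZR (co2 x) * (2 * u * v).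
Definition cabs2 (x : ZEta) : R := cre x ^ 2 + cim x ^ 2.

Hypothesis Hroots : conj_roots (IZR p) (IZR q) (IZR r) eta u v.

Ltac expand x y :=
  destruct Hroots as [Hp [Hq Hr]]; destruct x as [x0 x1 x2], y as [y0 y1 y2];
  unfold emb, cre, cim, zmul; simpl; push_IZR; rewrite Hp, Hq, Hr; ring.

Lemma emb_mul x y : emb (zmul x y) = emb x * emb y.
Proof. expand x y. Qed.

Lemma cre_mul x y : cre (zmul x y) = cre x * cre y - cim x * cim y.
Proof. expand x y. Qed.

Lemma cim_mul x y : cim (zmul x y) = cre x * cim y + cim x * cre y.
Proof. expand x y. Qed.

Lemma cabs2_mul x y : cabs2 (zmul x y) = cabs2 x * cabs2 y.
Proof. unfold cabs2. rewrite cre_mul, cim_mul. ring. Qed.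

Lemma znorm_eq x : IZR (znorm x) = emb x * cabs2 x.
Proof.
  destruct Hroots as [Hp [Hq Hr]]. destruct x as [x0 x1 x2].
  unfold znorm, zadj, zmul, emb, cabs2, cre, cim; cbn [co0 co1 co2].
  push_IZR. rewrite Hp, Hq, Hr. ring.
Qed.

Lemma ztrace_eq x : IZR (ztrace x) = emb x + 2 * cre x.
Proof.
  destruct Hroots as [Hp [Hq _]]. destruct x as [x0 x1 x2].
  unfold ztrace, emb, cre; cbn [co0 co1 co2]. push_IZR. rewrite Hp, Hq. ring.
Qed.

Hypothesis Hv : 0 < v.
Hypothesis Hindep : int_lin_indep eta.

Lemma cim_eq0 x : cim x = 0 -> co1 x = 0%Z /\ co2 x = 0%Z.
Proof.
  destruct Hroots as [Hp _]. unfold cim. intro H.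
  assert (H1 : IZR (co1 x) + IZR (co2 x) * (2 * u) = 0)
    by (apply Rmult_eq_reg_r with v; lra).
  destruct (Hindep (- (p * co2 x + co1 x))%Z (co2 x) 0%Z) as [H2 [H3 _]].
  { push_IZR. replace eta with (IZR p - 2 * u) by lra. nra. }
  lia.
Qed.

Lemma cabs2_pos x : x <> mkZEta 0 0 0 -> 0 < cabs2 x.
Proof.
  intro Hx. unfold cabs2.
  destruct (Req_dec (cim x) 0) as [Him|Him]; [|nra].
  destruct (cim_eq0 x Him) as [E1 E2].
  assert (cre x <> 0); [|nra].
  unfold cre. rewrite E1, E2. intro E. apply Hx. destruct x as [x0 x1 x2]; cbn [co0 co1 co2] in *.
  subst. f_equal. apply eq_IZR. lra.
Qed.

Lemma emb_neq0 x : x <> mkZEta 0 0 0 -> emb x <> 0.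
Proof.
  intros Hx E. destruct (Hindep _ _ _ E) as [E0 [E1 E2]].
  apply Hx. destruct x as [x0 x1 x2]; cbn [co0 co1 co2] in *. subst. reflexivity.
Qed.

Lemma znorm_neq0 x : x <> mkZEta 0 0 0 -> znorm x <> 0%Z.
Proof.
  intros Hx E. pose proof (znorm_eq x) as N. rewrite E in N.
  pose proof (cabs2_pos x Hx). pose proof (emb_neq0 x Hx).
  symmetry in N. apply Rmult_integral in N. lra.
Qed.

End CubicOrder.

Lemma Q2R_mul_den (x : Q) : Q2R x * IZR (Z.pos (Qden x)) = IZR (Qnum x).
Proof. unfold Q2R. field. apply not_0_IZR. lia. Qed.

Lemma Q2R_inject_Z (z : Z) : Q2R (z # 1) = IZR z.
Proof. unfold Q2R; simpl. field. Qed.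

Lemma integral_scaling theta a b c :
  cubic_min_poly theta a b c -> only_real_root theta a b c ->
  exists (d : positive) (p q r : Z),
    let eta := IZR (Z.pos d) * theta in
    eta ^ 3 = IZR p * eta ^ 2 + IZR q * eta + IZR r /\
    (forall x, x ^ 3 = IZR p * x ^ 2 + IZR q * x + IZR r -> x = eta) /\
    int_lin_indep eta.
Proof.
  intros [Hroot Hind] Hone.
  set (da := Qden a). set (db := Qden b). set (dc := Qden c).
  set (d := (da * db * dc)%positive).
  assert (Hd : 0 < IZR (Z.pos d)) by (apply IZR_lt; lia).
  pose proof (Q2R_mul_den a) as Ha. pose proof (Q2R_mul_den b) as Hb.
  pose proof (Q2R_mul_den c) as Hc.
  fold da in Ha. fold db in Hb. fold dc in Hc.
  assert (Ed : IZR (Z.pos d) = IZR (Z.pos da) * IZR (Z.pos db) * IZR (Z.pos dc))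
    by (unfold d; rewrite !Pos2Z.inj_mul, !mult_IZR; ring).
  set (p := (- (Qnum a * Z.pos db * Z.pos dc))%Z).
  set (q := (- (Qnum b * Z.pos da * Z.pos dc * Z.pos d))%Z).
  set (r := (- (Qnum c * Z.pos da * Z.pos db * Z.pos d * Z.pos d))%Z).
  assert (Ep : IZR p = - IZR (Z.pos d) * Q2R a) by (unfold p; push_IZR; rewrite <- Ha, Ed; ring).
  assert (Eq : IZR q = - IZR (Z.pos d) ^ 2 * Q2R b)
    by (unfold q; push_IZR; rewrite <- Hb, Ed; ring).
  assert (Er : IZR r = - IZR (Z.pos d) ^ 3 * Q2R c)
    by (unfold r; push_IZR; rewrite <- Hc, Ed; ring).
  exists d, p, q, r. cbv zeta. split; [|split].
  - rewrite Ep, Eq, Er.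
    replace (Q2R c) with (- (theta ^ 3 + Q2R a * theta ^ 2 + Q2R b * theta)) by lra. ring.
  - intros x Hx.
    assert (Hx' : x / IZR (Z.pos d) = theta).
    { apply Hone. apply Rmult_eq_reg_l with (IZR (Z.pos d) ^ 3); [|apply pow_nonzero; lra].
      rewrite Rmult_0_r. rewrite Ep, Eq, Er in Hx.
      transitivity (x ^ 3 - (- IZR (Z.pos d) * Q2R a * x ^ 2 + - IZR (Z.pos d) ^ 2 * Q2R b * x
                             + - IZR (Z.pos d) ^ 3 * Q2R c)); [field; lra|lra]. }
    rewrite <- Hx'. field. lra.
  - intros z0 z1 z2 Hz.
    destruct (Hind (z0 # 1) ((z1 * Z.pos d) # 1) ((z2 * Z.pos d * Z.pos d) # 1)) as [H0 [H1 H2]].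
    { rewrite !Q2R_inject_Z. push_IZR. rewrite <- Hz. ring. }
    rewrite Q2R_inject_Z in H0, H1, H2. apply eq_IZR in H0, H1, H2. nia.
Qed.

Lemma cubic_conj_roots (P Q R eta : R) :
  eta ^ 3 = P * eta ^ 2 + Q * eta + R ->
  (forall x, x ^ 3 = P * x ^ 2 + Q * x + R -> x = eta) -> P <> 3 * eta ->
  exists u v, 0 < v /\ conj_roots P Q R eta u v.
Proof.
  intros Hroot Hone HP.
  set (S := P - eta). set (Pr := - Q - S * eta).
  assert (HR : R = eta * Pr) by (unfold Pr, S; nra).
  assert (Hfact : forall x, x ^ 3 - (P * x ^ 2 + Q * x + R) = (x - eta) * (x ^ 2 - S * x + Pr))
    by (intro x; rewrite HR; unfold Pr, S; ring).
  assert (Hdisc : S ^ 2 - 4 * Pr < 0).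
  { destruct (Rlt_or_le (S ^ 2 - 4 * Pr) 0) as [Hl|Hl]; [exact Hl|exfalso].
    (* otherwise the real quadratic factor has the roots (S +- w) / 2, both equal to eta *)
    set (w := sqrt (S ^ 2 - 4 * Pr)).
    assert (Hw : w * w = S ^ 2 - 4 * Pr) by (apply sqrt_sqrt; lra).
    assert (Hquad : forall x, x ^ 2 - S * x + Pr = 0 -> x = eta).
    { intros x Hx. apply Hone. apply Rminus_diag_uniq. rewrite Hfact, Hx. ring. }
    assert (E1 : (S + w) / 2 = eta).
    { apply Hquad. replace (((S + w) / 2) ^ 2 - S * ((S + w) / 2) + Pr)
        with ((w * w - (S ^ 2 - 4 * Pr)) / 4) by field. rewrite Hw. field. }
    assert (E2 : (S - w) / 2 = eta).
    { apply Hquad. replace (((S - w) / 2) ^ 2 - S * ((S - w) / 2) + Pr)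
        with ((w * w - (S ^ 2 - 4 * Pr)) / 4) by field. rewrite Hw. field. }
    apply HP. unfold S in E1, E2. lra. }
  set (u := S / 2). set (v := sqrt (Pr - u ^ 2)).
  assert (Hv2 : v * v = Pr - u ^ 2) by (apply sqrt_sqrt; unfold u; nra).
  exists u, v. split; [apply sqrt_lt_R0; unfold u; nra|].
  unfold conj_roots. replace (v ^ 2) with (v * v) by ring. rewrite Hv2, HR.
  unfold u, Pr, S. repeat split; field.
Qed.

Lemma emb_zscale eta k x : emb eta (zscale k x) = IZR k * emb eta x.
Proof. unfold emb, zscale; cbn [co0 co1 co2]. rewrite !mult_IZR. ring. Qed.

Lemma in_Q_theta3_integral theta (d : positive) x : in_Q_theta3 theta x ->
  exists (D : positive) (g : ZEta), IZR (Z.pos D) * x = emb (IZR (Z.pos d) * theta) g.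
Proof.
  intros [q0 [q1 [q2 ->]]].
  pose proof (Q2R_mul_den q0) as H0. pose proof (Q2R_mul_den q1) as H1.
  pose proof (Q2R_mul_den q2) as H2.
  exists (d * d * Qden q0 * Qden q1 * Qden q2)%positive.
  exists (mkZEta (Qnum q0 * Z.pos d * Z.pos d * Z.pos (Qden q1) * Z.pos (Qden q2))
                 (Qnum q1 * Z.pos d * Z.pos (Qden q0) * Z.pos (Qden q2))
                 (Qnum q2 * Z.pos (Qden q0) * Z.pos (Qden q1))).
  unfold emb; cbn [co0 co1 co2]. rewrite !Pos2Z.inj_mul. push_IZR.
  rewrite <- H0, <- H1, <- H2. ring.
Qed.

Lemma common_integral_multiple theta (d : positive) x y :
  in_Q_theta3 theta x -> in_Q_theta3 theta y ->
  exists (D : positive) (gx gy : ZEta),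
    IZR (Z.pos D) * x = emb (IZR (Z.pos d) * theta) gx /\
    IZR (Z.pos D) * y = emb (IZR (Z.pos d) * theta) gy.
Proof.
  intros Hx Hy.
  destruct (in_Q_theta3_integral theta d x Hx) as [Dx [gx Ex]].
  destruct (in_Q_theta3_integral theta d y Hy) as [Dy [gy Ey]].
  exists (Dx * Dy)%positive, (zscale (Z.pos Dy) gx), (zscale (Z.pos Dx) gy).
  rewrite !emb_zscale, <- Ex, <- Ey, Pos2Z.inj_mul, mult_IZR. split; ring.
Qed.

Lemma Rabs_lin3_le a b c t1 t2 H : Rabs a <= H -> Rabs b <= H -> Rabs c <= H ->
  Rabs (a + b * t1 + c * t2) <= H * (1 + Rabs t1 + Rabs t2).
Proof.
  intros Ha Hb Hc. pose proof (Rabs_pos t1). pose proof (Rabs_pos t2).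
  eapply Rle_trans; [apply Rabs_triang|].
  eapply Rle_trans; [apply Rplus_le_compat_r, Rabs_triang|].
  rewrite !Rabs_mult.
  assert (Rabs b * Rabs t1 <= H * Rabs t1) by (apply Rmult_le_compat_r; lra).
  assert (Rabs c * Rabs t2 <= H * Rabs t2) by (apply Rmult_le_compat_r; lra).
  nra.
Qed.

Lemma cell_index_bounds X w (M : nat) : 0 < w -> Rabs X <= w * INR M / 2 ->
  (0 <= Int_part ((X + w * INR M / 2) / w) <= Z.of_nat M)%Z.
Proof.
  intros Hw HX. apply Rabs_le_inv in HX.
  set (y := (X + w * INR M / 2) / w).
  assert (Hy : 0 <= y <= INR M).
  { unfold y. split.
    - apply Rmult_le_pos; [lra|left; apply Rinv_0_lt_compat, Hw].
    - apply Rmult_le_reg_r with w; [lra|]. unfold Rdiv. rewrite Rmult_assoc, Rinv_l; lra. }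
  destruct (base_Int_part y). split.
  - assert (Hlo : IZR (-1) < IZR (Int_part y)) by (simpl; lra). apply lt_IZR in Hlo. lia.
  - apply le_IZR. rewrite <- INR_IZR_INZ. lra.
Qed.

Lemma pigeonhole_square (M : nat) (w : R) (f g : nat -> R) : 0 < w ->
  (forall k, (k <= (M + 1) * (M + 1))%nat ->
     Rabs (f k) <= w * INR M / 2 /\ Rabs (g k) <= w * INR M / 2) ->
  exists i j, (i < j <= (M + 1) * (M + 1))%nat /\ Rabs (f i - f j) < w /\ Rabs (g i - g j) < w.
Proof.
  intros Hw Hfg.
  set (cell := fun X => Int_part ((X + w * INR M / 2) / w)).
  set (key := fun k => (Z.to_nat (cell (f k)) * (M + 1) + Z.to_nat (cell (g k)))%nat).
  assert (Hcells : forall k, (k <= (M + 1) * (M + 1))%nat ->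
            (0 <= cell (f k) <= Z.of_nat M)%Z /\ (0 <= cell (g k) <= Z.of_nat M)%Z)
    by (intros k Hk; destruct (Hfg k Hk); split; apply cell_index_bounds; auto).
  destruct (pigeonhole ((M + 1) * (M + 1)) key) as [i [j [Hij Hkey]]].
  { intros k Hk. destruct (Hcells k Hk). unfold key. nia. }
  destruct (Hcells i ltac:(lia)), (Hcells j ltac:(lia)).
  unfold key in Hkey.
  assert (Ef : cell (f i) = cell (f j)) by nia.
  assert (Eg : cell (g i) = cell (g j)) by nia.
  assert (Hclose : forall X Y, cell X = cell Y -> Rabs (X - Y) < w).
  { intros X Y E. apply Int_part_eq_dist_lt1 in E.
    replace ((X + w * INR M / 2) / w - (Y + w * INR M / 2) / w) with ((X - Y) / w) in E
      by (field; lra).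
    unfold Rdiv in E. rewrite Rabs_mult, Rabs_inv, (Rabs_right w) in E by lra.
    apply Rmult_lt_reg_r with (/ w); [apply Rinv_0_lt_compat; lra|]. rewrite Rinv_r; lra. }
  exists i, j. auto.
Qed.

Definition digits (m k : nat) : ZEta :=
  mkZEta (Z.of_nat (k mod m)) (Z.of_nat (k / m mod m)) (Z.of_nat (k / m / m)).

Lemma digits_bounds m k : (k < m * m * m)%nat ->
  (0 <= co0 (digits m k) < Z.of_nat m)%Z /\ (0 <= co1 (digits m k) < Z.of_nat m)%Z /\
  (0 <= co2 (digits m k) < Z.of_nat m)%Z.
Proof.
  intro Hk. assert (Hm : (0 < m)%nat) by (destruct m; [simpl in Hk|]; lia).
  pose proof (Nat.mod_upper_bound k m ltac:(lia)).
  pose proof (Nat.mod_upper_bound (k / m) m ltac:(lia)).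
  assert (k / m / m < m)%nat
    by (do 2 apply Nat.Div0.div_lt_upper_bound; lia).
  unfold digits; cbn [co0 co1 co2]. lia.
Qed.

Lemma digits_inj m i j : digits m i = digits m j -> i = j.
Proof.
  unfold digits. intro E. injection E as E0 E1 E2.
  apply Nat2Z.inj in E0, E1, E2.
  rewrite (Nat.div_mod_eq i m), (Nat.div_mod_eq j m), (Nat.div_mod_eq (i / m) m),
    (Nat.div_mod_eq (j / m) m).
  lia.
Qed.

Definition coords_le (x : ZEta) (H : R) : Prop :=
  Rabs (IZR (co0 x)) <= H /\ Rabs (IZR (co1 x)) <= H /\ Rabs (IZR (co2 x)) <= H.

Lemma cre_zsub u v x y : cre u v (zsub x y) = cre u v x - cre u v y.
Proof. unfold cre, zsub; cbn [co0 co1 co2]. rewrite !minus_IZR. ring. Qed.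

Lemma cim_zsub u v x y : cim u v (zsub x y) = cim u v x - cim u v y.
Proof. unfold cim, zsub; cbn [co0 co1 co2]. rewrite !minus_IZR. ring. Qed.

(* Pigeonhole on the complex images of (s^3 + 1)^2 + 1 points of the box [0, s^2]^3. *)
Lemma dirichlet_box u v B (s : nat) : 0 < B -> (1 <= s)%nat ->
  (forall x H, coords_le x H -> Rabs (cre u v x) <= B * H /\ Rabs (cim u v x) <= B * H) ->
  exists x, x <> mkZEta 0 0 0 /\ coords_le x (INR (s * s)) /\
    Rabs (cre u v x) < 2 * B / INR s /\ Rabs (cim u v x) < 2 * B / INR s.
Proof.
  intros HB Hs1 Hbound.
  assert (Hs1' : 1 <= INR s) by (apply (le_INR 1); lia).
  set (H := (s * s)%nat). set (M := (s * s * s)%nat).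
  assert (Hbox : forall k, (k <= (M + 1) * (M + 1))%nat ->
            let y := digits (H + 1) k in
            0 <= IZR (co0 y) <= INR H /\ 0 <= IZR (co1 y) <= INR H /\ 0 <= IZR (co2 y) <= INR H).
  { intros k Hk. assert (Hk' : (k < (H + 1) * (H + 1) * (H + 1))%nat) by (unfold M, H in *; nia).
    destruct (digits_bounds _ _ Hk') as [D0 [D1 D2]].
    rewrite INR_IZR_INZ. repeat split; apply IZR_le; lia. }
  set (w := 2 * B / INR s).
  assert (Hw : 0 < w) by (apply Rdiv_lt_0_compat; lra).
  assert (Hpt : forall k, (k <= (M + 1) * (M + 1))%nat ->
            Rabs (cre u v (digits (H + 1) k)) <= w * INR M / 2 /\
            Rabs (cim u v (digits (H + 1) k)) <= w * INR M / 2).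
  { intros k Hk.
    replace (w * INR M / 2) with (B * INR H) by (unfold w, M, H; rewrite !mult_INR; field; lra).
    apply Hbound. pose proof (Hbox k Hk). repeat split; apply Rabs_le; lra. }
  destruct (pigeonhole_square M w _ _ Hw Hpt) as [i [j [Hij [Hre Him]]]].
  exists (zsub (digits (H + 1) i) (digits (H + 1) j)). split; [|split].
  - intro E. apply zsub_eq0, digits_inj in E. lia.
  - pose proof (Hbox i ltac:(lia)). pose proof (Hbox j ltac:(lia)).
    unfold coords_le, zsub; cbn [co0 co1 co2]. rewrite !minus_IZR.
    repeat split; apply Rabs_le; lra.
  - rewrite cre_zsub, cim_zsub. auto.
Qed.

Section SmallElements.
Variables (p q r : Z) (eta u v : R).
Hypothesis Hroots : conj_roots (IZR p) (IZR q) (IZR r) eta u v.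

Lemma embeddings_linear_bound : exists B, 0 < B /\ forall x H, coords_le x H ->
  Rabs (cre u v x) <= B * H /\ Rabs (cim u v x) <= B * H /\ Rabs (emb eta x) <= B * H.
Proof.
  set (B1 := 1 + Rabs u + Rabs (u ^ 2 - v ^ 2)).
  set (B2 := 1 + Rabs v + Rabs (2 * u * v)).
  set (B3 := 1 + Rabs eta + Rabs (eta ^ 2)).
  assert (HB1 : 1 <= B1) by (unfold B1; pose proof (Rabs_pos u); pose proof (Rabs_pos (u ^ 2 - v ^ 2)); lra).
  assert (HB2 : 1 <= B2) by (unfold B2; pose proof (Rabs_pos v); pose proof (Rabs_pos (2 * u * v)); lra).
  assert (HB3 : 1 <= B3) by (unfold B3; pose proof (Rabs_pos eta); pose proof (Rabs_pos (eta ^ 2)); lra).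
  exists (B1 + B2 + B3). split; [lra|]. intros x H [H0 [H1 H2]].
  assert (HH : 0 <= H) by (pose proof (Rabs_pos (IZR (co0 x))); lra).
  pose proof (Rabs_lin3_le _ _ _ u (u ^ 2 - v ^ 2) H H0 H1 H2) as P1.
  pose proof (Rabs_lin3_le 0 _ _ v (2 * u * v) H ltac:(rewrite Rabs_R0; lra) H1 H2) as P2.
  pose proof (Rabs_lin3_le _ _ _ eta (eta ^ 2) H H0 H1 H2) as P3.
  rewrite Rplus_0_l in P2. fold B1 in P1. fold B2 in P2. fold B3 in P3.
  unfold cre, cim, emb. repeat split; nra.
Qed.

Lemma small_elements_bounded_norm : exists C0 : Z, forall rho, 0 < rho ->
  exists x, x <> mkZEta 0 0 0 /\ cabs2 u v x < rho /\ (Z.abs (znorm p q r x) <= C0)%Z.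
Proof.
  destruct embeddings_linear_bound as [B [HB Hbound]].
  exists (up (8 * B ^ 3)). intros rho Hrho.
  destruct (archimed (8 * B ^ 3)) as [HC0 _].
  assert (HBr : 0 < 8 * B ^ 2 / rho) by (apply Rdiv_lt_0_compat; nra).
  destruct (INR_up_nat (8 * B ^ 2 / rho)) as [s [Hs _]]; [lra|].
  assert (Hs1 : (1 <= s)%nat) by (destruct s; [rewrite INR_0 in Hs; lra|lia]).
  assert (Hs1' : 1 <= INR s) by (apply (le_INR 1); lia).
  destruct (dirichlet_box u v B s HB Hs1) as [x [Hx [Hcoord [Hre Him]]]].
  { intros x H Hx. destruct (Hbound x H Hx) as [? [? _]]. auto. }
  destruct (Hbound x _ Hcoord) as [_ [_ Hemb]]. rewrite mult_INR in Hemb.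
  assert (Hsmall : cabs2 u v x < 8 * B ^ 2 / (INR s * INR s)).
  { unfold cabs2. rewrite <- (pow2_abs (cre u v x)), <- (pow2_abs (cim u v x)).
    pose proof (Rabs_pos (cre u v x)). pose proof (Rabs_pos (cim u v x)).
    replace (8 * B ^ 2 / (INR s * INR s)) with (2 * (2 * B / INR s) ^ 2) by (field; lra). nra. }
  assert (0 <= cabs2 u v x) by (unfold cabs2; nra).
  exists x. split; [exact Hx|split].
  - eapply Rlt_le_trans; [exact Hsmall|].
    apply (Rmult_lt_compat_r rho) in Hs; [|lra].
    unfold Rdiv in *. rewrite Rmult_assoc, Rinv_l in Hs by lra.
    apply Rmult_le_reg_r with (INR s * INR s); [nra|].
    rewrite Rmult_assoc, Rinv_l by nra. nra.
  - apply le_IZR.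
    rewrite abs_IZR, (znorm_eq _ _ _ _ _ _ Hroots), Rabs_mult, (Rabs_right (cabs2 u v x)) by lra.
    apply Rle_trans with (B * (INR s * INR s) * (8 * B ^ 2 / (INR s * INR s))).
    + apply Rmult_le_compat; try lra. apply Rabs_pos.
    + replace (B * (INR s * INR s) * (8 * B ^ 2 / (INR s * INR s))) with (8 * B ^ 3)
        by (field; lra). lra.
Qed.

End SmallElements.


Lemma mul_nat_add_lt a b c m : (a < c)%nat -> (b < m)%nat -> (a * m + b < c * m)%nat.
Proof.
  intros. assert (S a * m <= c * m)%nat by (apply Nat.mul_le_mono_r; lia). simpl in *. lia.
Qed.

Lemma mul_nat_add_inj a b c d m : (a * m + b = c * m + d)%nat -> (b < m)%nat -> (d < m)%nat ->
  a = c /\ b = d.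
Proof.
  intros E Hb Hd. destruct (Nat.lt_trichotomy a c) as [H|[<-|H]].
  - pose proof (mul_nat_add_lt a b c m H Hb). lia.
  - lia.
  - pose proof (mul_nat_add_lt c d a m H Hd). lia.
Qed.

Lemma Nat_divide_fact n k : (1 <= k <= n)%nat -> Nat.divide k (fact n).
Proof.
  induction n as [|n IH]; intros Hk; [lia|].
  destruct (Nat.eq_dec k (S n)) as [->|Hne].
  - exists (fact n). simpl. ring.
  - destruct (IH ltac:(lia)) as [w Hw]. exists (S n * w)%nat. simpl fact. rewrite Hw. ring.
Qed.

Lemma pigeonhole_congruent (N : ZEta -> Z) (C0 : Z) (xs : nat -> ZEta) :
  (forall k, N (xs k) <> 0%Z /\ (Z.abs (N (xs k)) <= C0)%Z) ->
  exists i j z, (i < j)%nat /\ N (xs i) = N (xs j) /\ xs j = zadd (xs i) (zscale (N (xs i)) z).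
Proof.
  intro HN.
  (* every norm divides C0!, so residues modulo C0! detect congruence modulo the norm *)
  set (Mf := Z.of_nat (fact (Z.to_nat C0))).
  assert (HMf : (0 < Mf)%Z) by (unfold Mf; pose proof (lt_O_fact (Z.to_nat C0)); lia).
  set (mf := Z.to_nat Mf).
  set (res := fun (f : ZEta -> Z) k => Z.to_nat (f (xs k) mod Mf)).
  assert (Hres : forall f k, (res f k < mf)%nat)
    by (intros f k; unfold res, mf; pose proof (Z.mod_pos_bound (f (xs k)) Mf HMf); lia).
  set (key := fun k => (((Z.to_nat (N (xs k) + C0) * mf + res co0 k) * mf + res co1 k) * mf
                          + res co2 k)%nat).
  destruct (pigeonhole (Z.to_nat (2 * C0 + 1) * mf * mf * mf) key) as [i [j [Hij Hkey]]].
  { intros k _. unfold key. pose proof (HN k).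
    repeat apply mul_nat_add_lt; auto. lia. }
  unfold key in Hkey.
  apply mul_nat_add_inj in Hkey as [Hkey E2]; try apply Hres.
  apply mul_nat_add_inj in Hkey as [Hkey E1]; try apply Hres.
  apply mul_nat_add_inj in Hkey as [EN E0]; try apply Hres.
  destruct (HN i), (HN j).
  assert (Em : N (xs i) = N (xs j)) by lia.
  assert (Hdiv : (N (xs i) | Mf)%Z).
  { apply Z.divide_abs_l. destruct (Nat_divide_fact (Z.to_nat C0) (Z.to_nat (Z.abs (N (xs i)))))
      as [w Hw]; [lia|].
    exists (Z.of_nat w). unfold Mf. rewrite Hw, Nat2Z.inj_mul, Z2Nat.id; lia. }
  assert (Hco : forall f, res f i = res f j -> (N (xs i) | f (xs j) - f (xs i))%Z).
  { intros f Ef. unfold res in Ef.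
    pose proof (Z.mod_pos_bound (f (xs i)) Mf HMf). pose proof (Z.mod_pos_bound (f (xs j)) Mf HMf).
    apply Z2Nat.inj in Ef; [|lia|lia].
    apply (Z.divide_trans _ Mf); [exact Hdiv|].
    apply Z.mod_divide; [lia|]. apply Z.cong_iff_0. auto. }
  destruct (Hco co0 E0) as [z0 Z0], (Hco co1 E1) as [z1 Z1], (Hco co2 E2) as [z2 Z2].
  exists i, j, (mkZEta z0 z1 z2). split; [lia|split; [exact Em|]].
  destruct (xs j) as [a b c] eqn:Ej. unfold zadd, zscale; cbn [co0 co1 co2] in *.
  f_equal; lia.
Qed.

Section Units.
Variables (p q r : Z) (eta u v : R).
Hypothesis Hroots : conj_roots (IZR p) (IZR q) (IZR r) eta u v.
Hypothesis Hv : 0 < v.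
Hypothesis Hindep : int_lin_indep eta.

Lemma decreasing_small_sequence : exists (C0 : Z) (xs : nat -> ZEta),
  (forall k, znorm p q r (xs k) <> 0%Z /\ (Z.abs (znorm p q r (xs k)) <= C0)%Z) /\
  (forall k, cabs2 u v (xs (S k)) < cabs2 u v (xs k)).
Proof.
  destruct (small_elements_bounded_norm p q r eta u v Hroots) as [C0 HC0].
  assert (Hex : forall rho, exists x, 0 < rho ->
     x <> mkZEta 0 0 0 /\ cabs2 u v x < rho /\ (Z.abs (znorm p q r x) <= C0)%Z).
  { intro rho. destruct (Rlt_or_le 0 rho) as [H|H].
    - destruct (HC0 rho H) as [x Hx]. exists x. auto.
    - exists (mkZEta 0 0 0). intro; lra. }
  destruct (choice _ Hex) as [g Hg].
  pose proof (cabs2_pos p q r eta u v Hroots Hv Hindep) as Hpos.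
  set (xs := fix xs k := match k with 0%nat => g 1 | S k' => g (cabs2 u v (xs k')) end).
  assert (Hxs : forall k, xs k <> mkZEta 0 0 0 /\ (Z.abs (znorm p q r (xs k)) <= C0)%Z /\
                          cabs2 u v (xs (S k)) < cabs2 u v (xs k)).
  { induction k as [|k IH].
    - destruct (Hg 1) as [H0 [_ H1]]; [lra|]. split; [exact H0|split; [exact H1|]].
      apply (Hg (cabs2 u v (g 1))), Hpos, H0.
    - destruct IH as [H0 [_ H1]].
      destruct (Hg (cabs2 u v (xs k))) as [H2 [_ H3]]; [apply Hpos, H0|].
      split; [exact H2|split; [exact H3|]].
      apply (Hg (cabs2 u v (xs (S k)))), Hpos, H2. }
  exists C0, xs. split.
  - intro k. destruct (Hxs k) as [H0 [H1 _]]. split; [|exact H1].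
    exact (znorm_neq0 p q r eta u v Hroots Hv Hindep _ H0).
  - intro k. apply Hxs.
Qed.

(* y := x + N(x) z equals e x, so N(e) = 1 and e has a complex image of modulus < 1. *)
Lemma unit_of_congruent_pair x z :
  znorm p q r x <> 0%Z -> znorm p q r (zadd x (zscale (znorm p q r x) z)) = znorm p q r x ->
  cabs2 u v (zadd x (zscale (znorm p q r x) z)) < cabs2 u v x ->
  let e := zadd (mkZEta 1 0 0) (zmul p q r z (zadj p q r x)) in
  1 < emb eta e /\ emb eta e * cabs2 u v e = 1.
Proof.
  intros Hx HN Hlt e. set (y := zadd x (zscale (znorm p q r x) z)) in *.
  assert (Hey : zmul p q r e x = y) by apply zmul_one_add_adj.
  clearbody e y.
  pose proof (emb_mul p q r eta u v Hroots e x) as Hemb.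
  pose proof (cabs2_mul p q r eta u v Hroots e x) as Hcabs.
  rewrite Hey in Hemb, Hcabs.
  pose proof (znorm_eq p q r eta u v Hroots x) as Nx.
  pose proof (znorm_eq p q r eta u v Hroots y) as Ny.
  pose proof Hx as HN0. apply not_0_IZR in HN0.
  rewrite HN, Hemb, Hcabs, Nx in Ny. rewrite Nx in HN0.
  assert (0 < cabs2 u v x).
  { assert (0 <= cabs2 u v x) by (unfold cabs2; nra).
    destruct (Req_dec (cabs2 u v x) 0) as [E|E]; [rewrite E, Rmult_0_r in HN0; lra|lra]. }
  assert (Hunit : emb eta e * cabs2 u v e = 1).
  { apply Rmult_eq_reg_r with (emb eta x * cabs2 u v x); [|exact HN0].
    transitivity (emb eta e * emb eta x * (cabs2 u v e * cabs2 u v x)); [ring|].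
    rewrite <- Ny. ring. }
  split; [|exact Hunit].
  assert (Hce : cabs2 u v e < 1).
  { apply Rmult_lt_reg_r with (cabs2 u v x); [lra|]. rewrite <- Hcabs. lra. }
  assert (0 <= cabs2 u v e) by (unfold cabs2; nra).
  nra.
Qed.

Lemma unit_exists : exists e, 1 < emb eta e /\ emb eta e * cabs2 u v e = 1.
Proof.
  destruct decreasing_small_sequence as [C0 [xs [Hbnd Hdec]]].
  destruct (pigeonhole_congruent (znorm p q r) C0 xs Hbnd) as [i [j [z [Hij [HN Hxj]]]]].
  assert (Hlt : forall k l, (k < l)%nat -> cabs2 u v (xs l) < cabs2 u v (xs k)).
  { intros k l Hkl. induction Hkl; [apply Hdec|]. pose proof (Hdec m). lra. }
  eexists. apply unit_of_congruent_pair.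
  - apply Hbnd.
  - rewrite <- Hxj. auto.
  - rewrite <- Hxj. auto.
Qed.

End Units.

Fixpoint zpow (p q r : Z) (e : ZEta) (n : nat) : ZEta :=
  match n with 0%nat => mkZEta 1 0 0 | S n' => zmul p q r e (zpow p q r e n') end.

Lemma Rabs_cos_sin_comb_le A B x : Rabs (A * cos x + B * sin x) <= Rabs A + Rabs B.
Proof.
  eapply Rle_trans; [apply Rabs_triang|]. rewrite !Rabs_mult.
  pose proof (Rabs_pos A). pose proof (Rabs_pos B).
  assert (Rabs (cos x) <= 1) by apply Rabs_le, COS_bound.
  assert (Rabs (sin x) <= 1) by apply Rabs_le, SIN_bound.
  nra.
Qed.

Section UnitPowers.
Variables (p q r : Z) (eta u v : R).
Hypothesis Hroots : conj_roots (IZR p) (IZR q) (IZR r) eta u v.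
Variables (e : ZEta) (phi : R).
Hypothesis He : 1 < emb eta e.
Hypothesis Hunit : emb eta e * cabs2 u v e = 1.
Hypothesis Hre : cre u v e = sqrt (cabs2 u v e) * cos phi.
Hypothesis Him : cim u v e = sqrt (cabs2 u v e) * sin phi.

Let E := emb eta e.
Let rho := sqrt (cabs2 u v e).

Lemma rho_facts : 0 <= rho /\ rho ^ 2 * E = 1 /\ rho < 1.
Proof.
  assert (Hc : 0 <= cabs2 u v e) by (unfold cabs2; nra).
  assert (Hs : rho ^ 2 = cabs2 u v e) by (unfold rho; rewrite <- Rsqr_pow2; apply Rsqr_sqrt, Hc).
  pose proof (sqrt_pos (cabs2 u v e)). fold rho in H.
  assert (Hr2 : rho ^ 2 * E = 1) by (rewrite Hs, Rmult_comm; exact Hunit).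
  assert (rho ^ 2 < 1) by (fold E in He; nra).
  split; [lra|split; [exact Hr2|nra]].
Qed.

Lemma zpow_embeddings n :
  emb eta (zpow p q r e n) = E ^ n /\
  cre u v (zpow p q r e n) = rho ^ n * cos (INR n * phi) /\
  cim u v (zpow p q r e n) = rho ^ n * sin (INR n * phi).
Proof.
  induction n as [|n [I1 [I2 I3]]].
  - unfold emb, cre, cim; cbn [zpow co0 co1 co2]. rewrite INR_0, !Rmult_0_l, cos_0, sin_0.
    repeat split; ring.
  - cbn [zpow]. rewrite (emb_mul p q r eta u v Hroots), (cre_mul p q r eta u v Hroots),
      (cim_mul p q r eta u v Hroots), I1, I2, I3, Hre, Him.
    fold rho. fold E. rewrite S_INR.
    replace ((INR n + 1) * phi) with (phi + INR n * phi) by ring.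
    rewrite cos_plus, sin_plus. simpl. repeat split; ring.
Qed.

Lemma ztrace_zpow_near n : Rabs (IZR (ztrace p q (zpow p q r e n)) - E ^ n) <= 2 * rho ^ n.
Proof.
  rewrite (ztrace_eq p q r eta u v Hroots). destruct (zpow_embeddings n) as [-> [-> _]].
  destruct rho_facts as [R0 _]. pose proof (pow_le rho n R0).
  replace (E ^ n + 2 * (rho ^ n * cos (INR n * phi)) - E ^ n)
    with (2 * rho ^ n * cos (INR n * phi)) by ring.
  rewrite !Rabs_mult, (Rabs_right 2), (Rabs_right (rho ^ n)) by lra.
  assert (Rabs (cos (INR n * phi)) <= 1) by apply Rabs_le, COS_bound. nra.
Qed.

Lemma ztrace_mul_near (g : ZEta) (n : nat) : exists k : Z,
  IZR (ztrace p q (zpow p q r e n)) * emb eta g - IZR k =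
  2 * rho ^ n * ((emb eta g - cre u v g) * cos (INR n * phi) + cim u v g * sin (INR n * phi)).
Proof.
  exists (ztrace p q (zmul p q r g (zpow p q r e n))).
  rewrite !(ztrace_eq p q r eta u v Hroots), (emb_mul p q r eta u v Hroots),
    (cre_mul p q r eta u v Hroots).
  destruct (zpow_embeddings n) as [-> [-> ->]]. ring.
Qed.

Lemma dist_nint_ztrace_mul_le (g : ZEta) (n : nat) :
  dist_nint (IZR (ztrace p q (zpow p q r e n)) * emb eta g) <=
  2 * rho ^ n * Rabs ((emb eta g - cre u v g) * cos (INR n * phi) + cim u v g * sin (INR n * phi)).
Proof.
  destruct (ztrace_mul_near g n) as [k Ek].
  eapply Rle_trans; [apply (dist_nint_le _ k)|]. rewrite Ek, !Rabs_mult.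
  destruct rho_facts as [R0 _]. pose proof (pow_le rho n R0).
  rewrite (Rabs_right 2), (Rabs_right (rho ^ n)) by lra. lra.
Qed.

Lemma ztrace_zpow_unbounded b : exists N0, forall n, (N0 <= n)%nat ->
  b <= IZR (ztrace p q (zpow p q r e n)).
Proof.
  fold E in He.
  destruct (Pow_x_infinity E ltac:(rewrite Rabs_right; lra) (b + 2)) as [N0 HN0].
  exists N0. intros n Hn. specialize (HN0 n Hn).
  pose proof (ztrace_zpow_near n) as Hnear. apply Rabs_le_inv in Hnear.
  destruct rho_facts as [R0 [_ R2]].
  assert (rho ^ n <= 1) by (rewrite <- (pow1 n); apply pow_incr; lra).
  rewrite Rabs_right in HN0 by (apply Rle_ge, pow_le; lra). lra.
Qed.

Lemma product_dist_nint_bound (D : positive) alpha beta gA gB RA chi n :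
  IZR (Z.pos D) * alpha = emb eta gA -> IZR (Z.pos D) * beta = emb eta gB ->
  emb eta gA - cre u v gA = RA * cos chi -> cim u v gA = RA * sin chi ->
  0 <= IZR (ztrace p q (zpow p q r e n)) ->
  let m := IZR (Z.pos D) * IZR (ztrace p q (zpow p q r e n)) in
  m * dist_nint (m * alpha) * dist_nint (m * beta) <=
  12 * IZR (Z.pos D) * Rabs RA * (Rabs (emb eta gB - cre u v gB) + Rabs (cim u v gB))
     * Rabs (cos (INR n * phi - chi)).
Proof.
  intros HA HB HcA HsA Ht m. set (t := IZR (ztrace p q (zpow p q r e n))) in *.
  set (SB := Rabs (emb eta gB - cre u v gB) + Rabs (cim u v gB)).
  set (c := Rabs (cos (INR n * phi - chi))).
  destruct rho_facts as [R0 [R1 R2]].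
  assert (Hrn : 0 <= rho ^ n) by (apply pow_le; lra).
  assert (DA : dist_nint (m * alpha) <= 2 * rho ^ n * (Rabs RA * c)).
  { replace (m * alpha) with (t * emb eta gA) by (unfold m; rewrite <- HA; ring).
    eapply Rle_trans; [apply dist_nint_ztrace_mul_le|].
    rewrite HcA, HsA. unfold c. rewrite cos_minus, <- Rabs_mult. apply Req_le.
    f_equal. f_equal. ring. }
  assert (DB : dist_nint (m * beta) <= 2 * rho ^ n * SB).
  { replace (m * beta) with (t * emb eta gB) by (unfold m; rewrite <- HB; ring).
    eapply Rle_trans; [apply dist_nint_ztrace_mul_le|].
    apply Rmult_le_compat_l; [lra|]. apply Rabs_cos_sin_comb_le. }
  assert (Hm : 0 <= m <= IZR (Z.pos D) * (E ^ n + 2)).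
  { pose proof (ztrace_zpow_near n) as Hn. fold t rho E in Hn. apply Rabs_le_inv in Hn.
    assert (HD : 0 < IZR (Z.pos D)) by (apply IZR_lt; lia).
    assert (rho ^ n <= 1) by (rewrite <- (pow1 n); apply pow_incr; lra).
    unfold m. split; [nra|]. apply Rmult_le_compat_l; lra. }
  (* E^n rho^(2n) = 1 absorbs the growth of m *)
  assert (Hpow : E ^ n * (rho ^ n * rho ^ n) = 1).
  { rewrite <- !Rpow_mult_distr, <- (pow1 n). f_equal. rewrite <- R1. ring. }
  assert (Hr2 : rho ^ n * rho ^ n <= 1).
  { rewrite <- Rpow_mult_distr, <- (pow1 n). apply pow_incr. nra. }
  pose proof (dist_nint_ge0 (m * alpha)). pose proof (dist_nint_ge0 (m * beta)).
  assert (0 <= SB) by (unfold SB; pose proof (Rabs_pos (emb eta gB - cre u v gB));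
                       pose proof (Rabs_pos (cim u v gB)); lra).
  assert (0 <= c) by apply Rabs_pos. pose proof (Rabs_pos RA).
  apply Rle_trans with
    (IZR (Z.pos D) * (E ^ n + 2) * (2 * rho ^ n * (Rabs RA * c)) * (2 * rho ^ n * SB)).
  { apply Rmult_le_compat; try apply Rmult_le_pos; try lra.
    apply Rmult_le_compat; lra. }
  replace (IZR (Z.pos D) * (E ^ n + 2) * (2 * rho ^ n * (Rabs RA * c)) * (2 * rho ^ n * SB))
    with (4 * IZR (Z.pos D) * Rabs RA * SB * c * (E ^ n * (rho ^ n * rho ^ n)
          + 2 * (rho ^ n * rho ^ n))) by ring.
  rewrite Hpow.
  assert (0 <= 4 * IZR (Z.pos D) * Rabs RA * SB * c)
    by (repeat apply Rmult_le_pos; try lra; apply IZR_le; lia).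
  nra.
Qed.

Hypothesis Hv : 0 < v.
Hypothesis Hindep : int_lin_indep eta.

(* Otherwise e^k would have a real image under the complex embedding, hence be rational. *)
Lemma sin_mul_arg_neq0 k : (1 <= k)%nat -> sin (INR k * phi) <> 0.
Proof.
  intros Hk Hs. destruct (zpow_embeddings k) as [P1 [P2 P3]].
  rewrite Hs, Rmult_0_r in P3.
  destruct (cim_eq0 p q r eta u v Hroots Hv Hindep _ P3) as [Z1 Z2].
  assert (Hreal : emb eta (zpow p q r e k) = cre u v (zpow p q r e k))
    by (unfold emb, cre; rewrite Z1, Z2; ring).
  rewrite P1, P2 in Hreal.
  destruct rho_facts as [R0 [_ R2]].
  assert (rho ^ k <= 1) by (rewrite <- (pow1 k); apply pow_incr; lra).
  assert (1 < E ^ k) by (apply Rlt_pow_R1; [exact He|lia]).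
  pose proof (COS_bound (INR k * phi)). pose proof (pow_le rho k R0).
  nra.
Qed.

Lemma products_arbitrarily_small (D : positive) alpha beta gA gB :
  IZR (Z.pos D) * alpha = emb eta gA -> IZR (Z.pos D) * beta = emb eta gB ->
  forall (eps : R) (N : nat), 0 < eps -> exists m : nat, (N < m)%nat /\
    Rabs (INR m * dist_nint (INR m * alpha) * dist_nint (INR m * beta)) < eps.
Proof.
  intros HA HB eps N Heps.
  destruct (polar_form (emb eta gA - cre u v gA) (cim u v gA)) as [chi [HcA HsA]].
  set (K := 12 * IZR (Z.pos D) * Rabs (sqrt ((emb eta gA - cre u v gA) ^ 2 + cim u v gA ^ 2))
              * (Rabs (emb eta gB - cre u v gB) + Rabs (cim u v gB))).
  assert (HK : 0 <= K).
  { assert (0 < IZR (Z.pos D)) by (apply IZR_lt; lia).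
    pose proof (Rabs_pos (sqrt ((emb eta gA - cre u v gA) ^ 2 + cim u v gA ^ 2))).
    pose proof (Rabs_pos (emb eta gB - cre u v gB)). pose proof (Rabs_pos (cim u v gB)).
    unfold K. repeat apply Rmult_le_pos; lra. }
  destruct (ztrace_zpow_unbounded (INR N + 1)) as [N0 HN0].
  destruct (cos_mul_arg_small phi sin_mul_arg_neq0 chi (eps / (K + 1)) N0) as [n [Hn Hcos]].
  { apply Rdiv_lt_0_compat; lra. }
  set (t := ztrace p q (zpow p q r e n)).
  assert (Ht : INR N + 1 <= IZR t) by exact (HN0 n Hn).
  assert (Ht0 : (0 < t)%Z) by (apply lt_IZR; pose proof (pos_INR N); lra).
  exists (Z.to_nat (Z.pos D * t)).
  assert (Hm : INR (Z.to_nat (Z.pos D * t)) = IZR (Z.pos D) * IZR t)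
    by (rewrite INR_IZR_INZ, Z2Nat.id by lia; apply mult_IZR).
  split.
  - apply INR_lt. rewrite Hm. pose proof (pos_INR N).
    assert (1 <= IZR (Z.pos D)) by (apply IZR_le; lia). nra.
  - rewrite Hm.
    pose proof (product_dist_nint_bound D alpha beta gA gB _ chi n HA HB HcA HsA
                  ltac:(apply IZR_le; lia)) as Hb. cbv zeta in Hb. fold t K in Hb.
    pose proof (dist_nint_ge0 (IZR (Z.pos D) * IZR t * alpha)).
    pose proof (dist_nint_ge0 (IZR (Z.pos D) * IZR t * beta)).
    assert (0 <= IZR (Z.pos D) * IZR t) by (apply Rmult_le_pos; apply IZR_le; lia).
    rewrite Rabs_right by (apply Rle_ge; apply Rmult_le_pos; [apply Rmult_le_pos|]; lra).
    eapply Rle_lt_trans; [exact Hb|].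
    apply Rle_lt_trans with (K * (eps / (K + 1))); [apply Rmult_le_compat_l; lra|].
    apply Rmult_lt_reg_r with (K + 1); [lra|].
    replace (K * (eps / (K + 1)) * (K + 1)) with (K * eps) by (field; lra). nra.
Qed.

End UnitPowers.

Theorem mainTheorem4 (theta : R) (a b c : Q)
  (Hmin : cubic_min_poly theta a b c)
  (Hone : only_real_root theta a b c)
  (alpha beta : R)
  (Ha : in_Q_theta3 theta alpha) (Hb : in_Q_theta3 theta beta) :
  exists psi : nat -> nat,
    (forall n, (0 < psi n)%nat) /\
    (forall n, (psi n < psi (S n))%nat) /\
    Un_cv (fun n => INR (psi n) * dist_nint (INR (psi n) * alpha)
                               * dist_nint (INR (psi n) * beta)) 0.
Proof.
  destruct (integral_scaling theta a b c Hmin Hone) as [d [p [q [r [Hroot [Hunique Hindep]]]]]].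
  set (eta := IZR (Z.pos d) * theta) in *.
  destruct (cubic_conj_roots (IZR p) (IZR q) (IZR r) eta Hroot Hunique) as [u [v [Hv Hroots]]].
  { intro Hp3. destruct (Hindep p (-3)%Z 0%Z) as [_ [H3 _]]; [rewrite Hp3; simpl; ring|lia]. }
  destruct (unit_exists p q r eta u v Hroots Hv Hindep) as [e [He Hunit]].
  destruct (polar_form (cre u v e) (cim u v e)) as [phi [Hre Him]].
  destruct (common_integral_multiple theta d alpha beta Ha Hb) as [D [gA [gB [HA HB]]]].
  apply (increasing_subsequence_cv0
           (fun m => INR m * dist_nint (INR m * alpha) * dist_nint (INR m * beta))).
  exact (products_arbitrarily_small p q r eta u v Hroots e phi He Hunit Hre Him Hv Hindep
           D alpha beta gA gB HA HB).
Qed.
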